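(* Let $(X,d)$ be a reflexive Busemann convex geodesic metric space and let $A,B\subseteq X$ be nonempty, closed and convex, with $A$ bounded. Let $T:A\cup B\to A\cup B$ be a noncyclic relatively nonexpansive mapping, and suppose the pair $(A,B)$ has proximal normal structure. Then there exists $(x,y)\in A\times B$ such that $x=Tx$, $y=Ty$ and $d(x,y)=\operatorname{dist}(A,B)$.
   Context: $\operatorname{dist}(A,B)=\inf\{d(x,y):x\in A,y\in B\}$, $\delta(x,A)=\sup\{d(x,y):y\in A\}$, $\delta(A,B)=\sup\{d(x,y):x\in A,y\in B\}$. A geodesic space is one in which any two points are joined by a geodesic segment; a subset is convex if it contains every geodesic segment joining two of its points. $X$ is Busemann convex if for any geodesics $c_1:[0,l_1]\to X$, $c_2:[0,l_2]\to X$, $d(c_1(tl_1),c_2(tl_2))\le (1-t)d(c_1(0),c_2(0))+t\,d(c_1(l_1),c_2(l_2))$ for all $t\in[0,1]$. $X$ is reflexive if every decreasing chain of nonempty closed convex bounded subsets has nonempty intersection. $T$ is relatively nonexpansive if $d(Tx,Ty)\le d(x,y)$ for all $x\in A$, $y\in B$; it is noncyclic if $T(A)\subseteq A$ and $T(B)\subseteq B$. A pair $(H_1,H_2)$ is proximal if for every $(a,b)\in H_1\times H_2$ there is $(a',b')\in H_1\times H_2$ with $d(a,b')=d(a',b)=\operatorname{dist}(H_1,H_2)$. A convex pair $(K_1,K_2)$ has proximal normal structure if for every closed bounded convex proximal pair $(H_1,H_2)$ with $H_1\subseteq K_1$, $H_2\subseteq K_2$, $\operatorname{dist}(H_1,H_2)=\operatorname{dist}(K_1,K_2)$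 and $\delta(H_1,H_2)>\operatorname{dist}(H_1,H_2)$, there exists $(x_1,x_2)\in H_1\times H_2$ with $\delta(x_1,H_2)<\delta(H_1,H_2)$ and $\delta(x_2,H_1)<\delta(H_1,H_2)$. *)

From Stdlib Require Import Reals.
From Coquelicot Require Import Coquelicot.
Open Scope R_scope.

Section MetricDefs.
Context {X : Type} (d : X -> X -> R).

Definition is_metric : Prop :=
  (forall x y, 0 <= d x y) /\
  (forall x y, d x y = 0 <-> x = y) /\
  (forall x y, d x y = d y x) /\
  (forall x y z, d x z <= d x y + d y z).

(* c : [0,l] -> X is a geodesic (isometric embedding of [0,l]); values of c
   outside [0,l] are irrelevant *)
Definition geodesic (c : R -> X) (l : R) : Prop :=
  0 <= l /\
  forall s t, 0 <= s <= l -> 0 <= t <= l -> d (c s) (c t) = Rabs (s - t).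

Definition geodesic_joining (c : R -> X) (x y : X) : Prop :=
  geodesic c (d x y) /\ c 0 = x /\ c (d x y) = y.

Definition geodesic_space : Prop :=
  forall x y, exists c, geodesic_joining c x y.

Definition convex (A : X -> Prop) : Prop :=
  forall x y c, A x -> A y -> geodesic_joining c x y ->
    forall t, 0 <= t <= d x y -> A (c t).

Definition busemann_convex : Prop :=
  forall c1 l1 c2 l2, geodesic c1 l1 -> geodesic c2 l2 ->
    forall t, 0 <= t <= 1 ->
      d (c1 (t * l1)) (c2 (t * l2)) <=
        (1 - t) * d (c1 0) (c2 0) + t * d (c1 l1) (c2 l2).

Definition nonempty (A : X -> Prop) : Prop := exists x, A x.

Definition metric_closed (A : X -> Prop) : Prop :=
  forall x, (forall eps, 0 < eps -> exists a, A a /\ d x a < eps) -> A x.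

Definition metric_bounded (A : X -> Prop) : Prop :=
  exists x0 M, forall a, A a -> d x0 a <= M.

Definition reflexive : Prop :=
  forall F : (X -> Prop) -> Prop,
    (exists C, F C) ->
    (forall C1 C2, F C1 -> F C2 ->
        (forall x, C1 x -> C2 x) \/ (forall x, C2 x -> C1 x)) ->
    (forall C, F C -> nonempty C /\ metric_closed C /\ convex C /\ metric_bounded C) ->
    exists x, forall C, F C -> C x.

Definition dist_sets (A B : X -> Prop) : R :=
  real (Glb_Rbar (fun r => exists x y, A x /\ B y /\ r = d x y)).

Definition delta_pt (x : X) (A : X -> Prop) : R :=
  real (Lub_Rbar (fun r => exists y, A y /\ r = d x y)).

Definition delta (A B : X -> Prop) : R :=
  real (Lub_Rbar (fun r => exists x y, A x /\ B y /\ r = d x y)).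

Definition relatively_nonexpansive (A B : X -> Prop) (T : X -> X) : Prop :=
  forall x y, A x -> B y -> d (T x) (T y) <= d x y.

Definition noncyclic (A B : X -> Prop) (T : X -> X) : Prop :=
  (forall x, A x -> A (T x)) /\ (forall y, B y -> B (T y)).

Definition proximal_pair (H1 H2 : X -> Prop) : Prop :=
  forall a b, H1 a -> H2 b ->
    exists a' b', H1 a' /\ H2 b' /\
      d a b' = dist_sets H1 H2 /\ d a' b = dist_sets H1 H2.

Definition proximal_normal_structure (K1 K2 : X -> Prop) : Prop :=
  forall H1 H2 : X -> Prop,
    nonempty H1 -> nonempty H2 ->
    metric_closed H1 -> metric_closed H2 -> metric_bounded H1 -> metric_bounded H2 ->
    convex H1 -> convex H2 -> proximal_pair H1 H2 ->
    (forall x, H1 x -> K1 x) -> (forall x, H2 x -> K2 x) ->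
    dist_sets H1 H2 = dist_sets K1 K2 ->
    delta H1 H2 > dist_sets H1 H2 ->
    exists x1 x2, H1 x1 /\ H2 x2 /\
      delta_pt x1 H2 < delta H1 H2 /\ delta_pt x2 H1 < delta H1 H2.

End MetricDefs.

(* Let D = dist(A, B). Among the pairs (E1, E2) of closed convex bounded
   T-invariant sets, E1 in A and E2 in B, containing two points at distance D,
   reflexivity (chains of closed convex bounded sets have a common point) and
   Zorn's lemma give a minimal pair (K1, K2). Minimality makes (K1, K2)
   proximal with dist(K1, K2) = D, and then proximal normal structure forces
   delta(K1, K2) = D: otherwise the points of K1 lying within
   delta(x1, K2) < delta(K1, K2) of all of K2 would form a smaller pair. So all
   points of K1 are at distance D from all points of K2. In a Busemann convex
   space no nontrivial geodesic is equidistant from a point, hence K1 and K2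
   are singletons, and T fixes them. *)

From mathcomp Require boolp classical_sets.
From Stdlib Require Import Reals Lra Classical.
From Coquelicot Require Import Coquelicot.
Open Scope R_scope.

Local Notation "E ⊆ F" := (forall x, E x -> F x) (at level 70, no associativity).

Lemma le_of_forall_gt (a b : R) : (forall r, b < r -> a <= r) -> a <= b.
Proof.
intros H. apply Rnot_lt_le; intros Hlt. specialize (H ((a + b) / 2) ltac:(lra)). lra.
Qed.

Section Geodesics.
Context {X : Type} (d : X -> X -> R).
Hypothesis Hm : is_metric d.

Lemma dist_ge0 x y : 0 <= d x y.
Proof. apply Hm. Qed.

Lemma dist_eq0 x y : d x y = 0 -> x = y.
Proof. apply Hm. Qed.

Lemma distC x y : d x y = d y x.
Proof. apply Hm. Qed.

Lemma dist_triangle x y z : d x z <= d x y + d y z.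
Proof. apply Hm. Qed.

Lemma dist_xx x : d x x = 0.
Proof. apply Hm. reflexivity. Qed.

Lemma geodesic_dist_l c x y t :
  geodesic_joining d c x y -> 0 <= t <= d x y -> d x (c t) = t.
Proof.
intros [[_ Hc] [H0 _]] Ht. rewrite <- H0 at 1. rewrite Hc by lra.
rewrite Rabs_left1; lra.
Qed.

Lemma geodesic_dist_r c x y t :
  geodesic_joining d c x y -> 0 <= t <= d x y -> d (c t) y = d x y - t.
Proof.
intros [[_ Hc] [_ H1]] Ht. rewrite <- H1 at 1. rewrite Hc by lra.
rewrite Rabs_left1; lra.
Qed.

Lemma geodesic_const z : geodesic_joining d (fun _ => z) z z.
Proof.
repeat split; rewrite ?dist_xx; try lra.
intros s t Hs Ht. replace s with 0 by lra. replace t with 0 by lra.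
rewrite Rminus_0_r, Rabs_R0; reflexivity.
Qed.

Lemma geodesic_rev c x y :
  geodesic_joining d c x y -> geodesic_joining d (fun s => c (d x y - s)) y x.
Proof.
intros [[Hl Hc] [H0 H1]]. unfold geodesic_joining, geodesic. rewrite (distC y x). repeat split.
- exact Hl.
- intros s t Hs Ht. rewrite Hc by lra. rewrite Rabs_minus_sym. f_equal; ring.
- rewrite Rminus_0_r; exact H1.
- rewrite Rminus_diag; exact H0.
Qed.

Lemma geodesic_concat c1 c2 a q b :
  geodesic_joining d c1 a q -> geodesic_joining d c2 q b ->
  d a q + d q b = d a b ->
  geodesic_joining d (fun s => if Rle_dec s (d a q) then c1 s else c2 (s - d a q)) a b.
Proof.
intros G1 G2 Hsum.
pose proof (dist_ge0 a q). pose proof (dist_ge0 q b).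
assert (Hmix : forall s t, 0 <= s <= d a q -> d a q < t <= d a b ->
          d (c1 s) (c2 (t - d a q)) = Rabs (s - t)).
{ intros s t Hs Ht. rewrite Rabs_left1 by lra. apply Rle_antisym.
  - eapply Rle_trans; [apply (dist_triangle _ q)|].
    rewrite (geodesic_dist_r c1 a q s G1 Hs), (geodesic_dist_l c2 q b) by (auto; lra). lra.
  - pose proof (dist_triangle a (c1 s) b) as T1.
    pose proof (dist_triangle (c1 s) (c2 (t - d a q)) b) as T2.
    rewrite (geodesic_dist_l c1 a q s G1 Hs) in T1.
    rewrite (geodesic_dist_r c2 q b) in T2 by (auto; lra). lra. }
destruct G1 as [[_ Hc1] [A1 B1]], G2 as [[_ Hc2] [A2 B2]].
repeat split.
- lra.
- intros s t Hs Ht.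
  destruct (Rle_dec s (d a q)), (Rle_dec t (d a q)).
  + apply Hc1; lra.
  + apply Hmix; lra.
  + rewrite distC, Rabs_minus_sym. apply Hmix; lra.
  + rewrite Hc2 by lra. f_equal. ring.
- destruct (Rle_dec 0 (d a q)); [exact A1|lra].
- destruct (Rle_dec (d a b) (d a q)).
  + replace (d a b) with (d a q) by lra. rewrite B1. apply dist_eq0. lra.
  + replace (d a b - d a q) with (d q b) by lra. exact B2.
Qed.

Lemma geodesic_param t l : 0 <= t <= l -> exists tau, 0 <= tau <= 1 /\ t = tau * l.
Proof.
intros Ht. destruct (Req_dec l 0) as [->|Hl].
- exists 0. split; lra.
- exists (t / l). split; [|field; exact Hl].
  split; [apply Rdiv_le_0_compat; lra|].
  apply (Rmult_le_reg_r l); [lra|]. unfold Rdiv. rewrite Rmult_assoc, Rinv_l; lra.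
Qed.

Hypothesis Hb : busemann_convex d.

Lemma busemann_joining c1 c2 x x' y y' tau :
  geodesic_joining d c1 x x' -> geodesic_joining d c2 y y' -> 0 <= tau <= 1 ->
  d (c1 (tau * d x x')) (c2 (tau * d y y')) <= (1 - tau) * d x y + tau * d x' y'.
Proof.
intros [G1 [A1 B1]] [G2 [A2 B2]] Ht.
pose proof (Hb c1 (d x x') c2 (d y y') G1 G2 tau Ht) as H.
rewrite A1, B1, A2, B2 in H. exact H.
Qed.

Lemma ball_geodesic c x x' z r t :
  geodesic_joining d c x x' -> 0 <= t <= d x x' ->
  d x z <= r -> d x' z <= r -> d (c t) z <= r.
Proof.
intros Hc Ht Hx Hx'. destruct (geodesic_param t (d x x') Ht) as [tau [Htau ->]].
pose proof (busemann_joining c _ x x' z z tau Hc (geodesic_const z) Htau) as H.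
rewrite dist_xx in H.
pose proof (Rmult_le_compat_l (1 - tau) _ _ ltac:(lra) Hx).
pose proof (Rmult_le_compat_l tau _ _ ltac:(lra) Hx'). lra.
Qed.

Hypothesis Hg : geodesic_space d.

Lemma midpoint_unique y z q q' r :
  d y q = r -> d q z = r -> d y q' = r -> d q' z = r -> d y z = 2 * r -> q = q'.
Proof.
intros E1 E2 E3 E4 E5.
destruct (Hg y q) as [g1 G1], (Hg q z) as [g2 G2].
destruct (Hg y q') as [h1 H1], (Hg q' z) as [h2 H2].
pose proof (geodesic_concat g1 g2 y q z G1 G2 ltac:(lra)) as C1.
pose proof (geodesic_concat h1 h2 y q' z H1 H2 ltac:(lra)) as C2.
pose proof (busemann_joining _ _ y z y z (1/2) C1 C2 ltac:(lra)) as Hbus.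
rewrite !dist_xx in Hbus. replace (1/2 * d y z) with r in Hbus by lra.
assert (Hq : (if Rle_dec r (d y q) then g1 r else g2 (r - d y q)) = q).
{ destruct (Rle_dec r (d y q)); [|lra]. rewrite <- E1. apply G1. }
assert (Hq' : (if Rle_dec r (d y q') then h1 r else h2 (r - d y q')) = q').
{ destruct (Rle_dec r (d y q')); [|lra]. rewrite <- E3. apply H1. }
rewrite Hq, Hq' in Hbus.
apply dist_eq0. pose proof (dist_ge0 q q'). lra.
Qed.

Lemma geodesic_half g y w :
  geodesic_joining d g y w ->
  d y (g (1/2 * d y w)) = d y w / 2 /\ d (g (1/2 * d y w)) w = d y w / 2.
Proof.
intros G. pose proof (dist_ge0 y w).
rewrite (geodesic_dist_l g y w), (geodesic_dist_r g y w) by (auto; lra). lra.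
Qed.

Lemma equidistant_endpoints c x x' y D :
  geodesic_joining d c x x' -> (forall t, 0 <= t <= d x x' -> d y (c t) = D) ->
  d y x = D /\ d y x' = D.
Proof.
intros Hc Hf. pose proof (dist_ge0 x x'). destruct Hc as [_ [H0 H1]].
split; [rewrite <- H0|rewrite <- H1]; apply Hf; lra.
Qed.

(* If y is at constant distance D from the geodesic [x, x'], the common
   midpoint p of [y, x] and [y, x'] is at constant distance D/2 from it:
   Busemann convexity puts both midpoints within D/2 of the midpoint z of
   [x, x'], so both are midpoints of [y, z], hence equal. *)
Lemma equidistant_geodesic_half c x x' y D :
  geodesic_joining d c x x' -> (forall t, 0 <= t <= d x x' -> d y (c t) = D) ->
  exists p, forall t, 0 <= t <= d x x' -> d p (c t) = D / 2.
Proof.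
intros Hc Hf. pose proof (dist_ge0 x x').
destruct (equidistant_endpoints c x x' y D Hc Hf) as [Dx Dx'].
assert (Dz : d y (c (1/2 * d x x')) = D) by (apply Hf; lra).
destruct (Hg y x) as [g0 G0], (Hg y x') as [g1 G1].
destruct (geodesic_half g0 y x G0) as [Y0 X0], (geodesic_half g1 y x' G1) as [Y1 X1].
rewrite Dx in Y0, X0. rewrite Dx' in Y1, X1.
pose proof (busemann_joining c g1 x x' y x' (1/2) Hc G1 ltac:(lra)) as Z1.
pose proof (busemann_joining _ g0 x' x y x (1/2) (geodesic_rev c x x' Hc) G0 ltac:(lra))
  as Z0; simpl in Z0.
rewrite dist_xx, (distC x y), Dx' in Z1.
rewrite dist_xx, (distC x' y), Dx', (distC x' x) in Z0.
replace (d x x' - 1/2 * d x x') with (1/2 * d x x') in Z0 by lra.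
set (z := c (1/2 * d x x')) in *.
pose proof (dist_triangle y (g0 (1/2 * D)) z).
pose proof (dist_triangle y (g1 (1/2 * D)) z).
assert (E : g0 (1/2 * D) = g1 (1/2 * D)).
{ rewrite Dx, (distC z) in Z0, Z1. apply (midpoint_unique y z _ _ (D/2)); lra. }
exists (g0 (1/2 * D)). intros t Ht. apply Rle_antisym.
- rewrite distC. apply (ball_geodesic c x x'); [exact Hc|exact Ht|..].
  + rewrite distC. lra.
  + rewrite distC, E. lra.
- pose proof (dist_triangle y (g0 (1/2 * D)) (c t)) as Htri. rewrite Hf in Htri by exact Ht. lra.
Qed.

Lemma eq0_of_mul_pow2_le a b : 0 <= a -> (forall n, a * 2 ^ n <= b) -> a = 0.
Proof.
intros Ha Hn. destruct Ha as [Ha|]; [exfalso|auto].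
destruct (Pow_x_infinity 2 ltac:(rewrite Rabs_pos_eq; lra) (b / a + 1)) as [N HN].
specialize (HN N (Nat.le_refl N)). specialize (Hn N).
rewrite Rabs_pos_eq in HN by (apply pow_le; lra).
apply Rge_le in HN. apply (Rmult_le_compat_l a) in HN; [|lra].
replace (a * (b / a + 1)) with (b + a) in HN by (field; lra). lra.
Qed.

Lemma equidistant_geodesic_trivial c x x' y D :
  geodesic_joining d c x x' -> (forall t, 0 <= t <= d x x' -> d y (c t) = D) -> x = x'.
Proof.
intros Hc Hf. apply dist_eq0, (eq0_of_mul_pow2_le _ (2 * D)); [apply dist_ge0|].
intros n. revert y D Hf. induction n as [|n IH]; intros y D Hf.
- destruct (equidistant_endpoints c x x' y D Hc Hf) as [Dx Dx'].
  pose proof (dist_triangle x y x') as Htri. rewrite (distC x y) in Htri.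
  simpl. lra.
- destruct (equidistant_geodesic_half c x x' y D Hc Hf) as [p Hp].
  specialize (IH p (D / 2) Hp). simpl. lra.
Qed.

Lemma convex_equidistant_eq E y D x x' :
  convex d E -> (forall z, E z -> d y z = D) -> E x -> E x' -> x = x'.
Proof.
intros HE Hf Ex Ex'. destruct (Hg x x') as [c Hc].
apply (equidistant_geodesic_trivial c x x' y D Hc).
intros t Ht. apply Hf, (HE x x' c Ex Ex' Hc t Ht).
Qed.

End Geodesics.

Section ReflexiveSpaces.
Context {X : Type} (d : X -> X -> R).
Hypotheses (Hm : is_metric d) (Hb : busemann_convex d) (Hg : geodesic_space d)
  (Hr : reflexive d).

Definition near (E : X -> Prop) (r : R) (x : X) : Prop := exists y, E y /\ d x y <= r.

Definition within (E : X -> Prop) (r : R) (x : X) : Prop := forall y, E y -> d x y <= r.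

Lemma bounded_sub E F : F ⊆ E -> metric_bounded d E -> metric_bounded d F.
Proof. intros HFE [z [M HM]]. exists z, M. auto. Qed.

Lemma near_bounded E r : metric_bounded d E -> metric_bounded d (near E r).
Proof.
intros [z [M HM]]. exists z, (M + r). intros x [y [Ey Hxy]].
pose proof (dist_triangle d Hm z y x) as Htri. rewrite (distC d Hm y x) in Htri.
specialize (HM y Ey). lra.
Qed.

Lemma within_point_bounded x r : metric_bounded d (within (eq x) r).
Proof.
exists x, r. intros y Hy. rewrite (distC d Hm). apply Hy. reflexivity.
Qed.

Lemma within_closed E F r :
  metric_closed d E -> metric_closed d (fun x => E x /\ within F r x).
Proof.
intros HE x Hx. split.
- apply HE. intros eps He. destruct (Hx eps He) as [a [[Ea _] Hxa]]. eauto.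
- intros y Fy. apply le_of_forall_gt. intros r' Hr'.
  destruct (Hx (r' - r) ltac:(lra)) as [a [[_ Ha] Hxa]].
  pose proof (dist_triangle d Hm x a y). specialize (Ha y Fy). lra.
Qed.

Lemma within_convex E F r : convex d E -> convex d (fun x => E x /\ within F r x).
Proof.
intros HE x x' c [Ex Hx] [Ex' Hx'] Hc t Ht. split.
- exact (HE x x' c Ex Ex' Hc t Ht).
- intros y Fy. apply (ball_geodesic d Hm Hb c x x'); auto.
Qed.

Lemma reflexive_chain_inter {I : Type} (C : I -> Prop) (le : I -> I -> Prop)
    (S : I -> X -> Prop) :
  (exists i, C i) -> (forall i j, C i -> C j -> le i j \/ le j i) ->
  (forall i j, le i j -> S i ⊆ S j) ->
  (forall i, C i -> nonempty (S i) /\ metric_closed d (S i) /\ convex d (S i) /\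
                    metric_bounded d (S i)) ->
  exists x, forall i, C i -> S i x.
Proof.
intros [i0 Ci0] Htot Hmono HS.
destruct (Hr (fun E => exists i, C i /\ E = S i)) as [x Hx].
- exists (S i0), i0. auto.
- intros E1 E2 [i [Ci ->]] [j [Cj ->]].
  destruct (Htot i j Ci Cj); [left|right]; apply Hmono; assumption.
- intros E [i [Ci ->]]. apply HS, Ci.
- exists x. intros i Ci. apply Hx. exists i. auto.
Qed.

Lemma near_limit E r0 x :
  metric_closed d E -> convex d E -> (forall r, r0 < r -> near E r x) -> near E r0 x.
Proof.
intros HE HcE Hx.
destruct (reflexive_chain_inter (fun r => r0 < r) Rle
            (fun r y => E y /\ within (eq x) r y)) as [y Hy].
- exists (r0 + 1). lra.
- intros r r' _ _. destruct (Rle_lt_dec r r'); [left|right]; lra.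
- intros r r' Hrr' y [Ey Hy]. split; [exact Ey|]. intros z Hz. specialize (Hy z Hz). lra.
- intros r Hr0. destruct (Hx r Hr0) as [y [Ey Hxy]]. split; [|split; [|split]].
  + exists y. split; [exact Ey|]. intros z <-. rewrite (distC d Hm). exact Hxy.
  + apply within_closed, HE.
  + apply within_convex, HcE.
  + apply (bounded_sub (within (eq x) r)); [intros z [_ Hz]; exact Hz|].
    apply within_point_bounded.
- destruct (Hy (r0 + 1) ltac:(lra)) as [Ey _]. exists y. split; [exact Ey|].
  apply le_of_forall_gt. intros r Hr0. rewrite (distC d Hm). apply (Hy r Hr0). reflexivity.
Qed.

Lemma near_closed E1 E2 r :
  metric_closed d E1 -> metric_closed d E2 -> convex d E2 ->
  metric_closed d (fun x => E1 x /\ near E2 r x).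
Proof.
intros H1 H2 Hc2 x Hx. split.
- apply H1. intros eps He. destruct (Hx eps He) as [a [[Ea _] Hxa]]. eauto.
- apply (near_limit E2 r x H2 Hc2). intros r' Hr'.
  destruct (Hx (r' - r) ltac:(lra)) as [a [[_ [y [Ey Hay]]] Hxa]].
  exists y. split; [exact Ey|]. pose proof (dist_triangle d Hm x a y). lra.
Qed.

Lemma near_convex E1 E2 r :
  convex d E1 -> convex d E2 -> convex d (fun x => E1 x /\ near E2 r x).
Proof.
intros H1 H2 x x' c [Ex [y [Ey Hxy]]] [Ex' [y' [Ey' Hxy']]] Hc t Ht.
split; [exact (H1 x x' c Ex Ex' Hc t Ht)|].
destruct (geodesic_param t (d x x') Ht) as [tau [Htau Et]].
destruct (Hg y y') as [c' Hc']. pose proof (dist_ge0 d Hm y y').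
exists (c' (tau * d y y')). split.
- apply (H2 y y' c' Ey Ey' Hc'). split; [apply Rmult_le_pos; lra|].
  rewrite <- (Rmult_1_l (d y y')) at 2. apply Rmult_le_compat_r; lra.
- pose proof (busemann_joining d Hb c c' x x' y y' tau Hc Hc' Htau) as Hbus.
  rewrite <- Et in Hbus.
  pose proof (Rmult_le_compat_l (1 - tau) _ _ ltac:(lra) Hxy).
  pose proof (Rmult_le_compat_l tau _ _ ltac:(lra) Hxy'). lra.
Qed.

Lemma near_attained A B r0 :
  metric_closed d A -> convex d A -> metric_bounded d A ->
  metric_closed d B -> convex d B ->
  (forall r, r0 < r -> exists x, A x /\ near B r x) -> exists x, A x /\ near B r0 x.
Proof.
intros HcA HvA HbA HcB HvB Happ.
destruct (reflexive_chain_inter (fun r => r0 < r) Rle (fun r x => A x /\ near B r x))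
  as [x Hx].
- exists (r0 + 1). lra.
- intros r r' _ _. destruct (Rle_lt_dec r r'); [left|right]; lra.
- intros r r' Hrr' x [Ax [y [By Hxy]]]. split; [exact Ax|]. exists y. split; [exact By|lra].
- intros r Hr0. split; [|split; [|split]].
  + apply Happ, Hr0.
  + apply near_closed; assumption.
  + apply near_convex; assumption.
  + apply (bounded_sub A); [intros x [Ax _]; exact Ax|exact HbA].
- exists x. split; [apply (Hx (r0 + 1)); lra|].
  apply (near_limit B r0 x HcB HvB). intros r Hr0. apply Hx, Hr0.
Qed.

End ReflexiveSpaces.

Lemma real_Glb_Rbar_spec (E : R -> Prop) :
  (exists r, E r) -> (forall r, E r -> 0 <= r) ->
  (forall r, E r -> real (Glb_Rbar E) <= r) /\
  (forall b, (forall r, E r -> b <= r) -> b <= real (Glb_Rbar E)).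
Proof.
intros [r0 Hr0] Hlb. destruct (Glb_Rbar_correct E) as [H1 H2].
destruct (Glb_Rbar E) as [m| |]; simpl.
- split; [exact H1|]. intros b Hb. apply (H2 (Finite b)). exact Hb.
- destruct (H1 r0 Hr0).
- destruct (H2 (Finite 0)). exact Hlb.
Qed.

Lemma real_Lub_Rbar_spec (E : R -> Prop) :
  (exists r, E r) -> (exists M, forall r, E r -> r <= M) ->
  (forall r, E r -> r <= real (Lub_Rbar E)) /\
  (forall b, (forall r, E r -> r <= b) -> real (Lub_Rbar E) <= b).
Proof.
intros [r0 Hr0] [M HM]. destruct (Lub_Rbar_correct E) as [H1 H2].
destruct (Lub_Rbar E) as [m| |]; simpl.
- split; [exact H1|]. intros b Hb. apply (H2 (Finite b)). exact Hb.
- destruct (H2 (Finite M)). exact HM.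
- destruct (H1 r0 Hr0).
Qed.

Section DistanceBetweenSets.
Context {X : Type} (d : X -> X -> R).
Hypothesis Hm : is_metric d.

Lemma dist_sets_spec A B : nonempty A -> nonempty B ->
  (forall x y, A x -> B y -> dist_sets d A B <= d x y) /\
  (forall b, (forall x y, A x -> B y -> b <= d x y) -> b <= dist_sets d A B).
Proof.
intros [x0 Ax0] [y0 By0].
destruct (real_Glb_Rbar_spec (fun r => exists x y, A x /\ B y /\ r = d x y)) as [G1 G2].
- exists (d x0 y0), x0, y0. auto.
- intros r [x [y [_ [_ ->]]]]. apply (dist_ge0 d Hm).
- split.
  + intros x y Ax By. apply G1. exists x, y. auto.
  + intros b Hb. apply G2. intros r [x [y [Ax [By ->]]]]. auto.
Qed.

Lemma dist_sets_approx A B r : nonempty A -> nonempty B ->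
  dist_sets d A B < r -> exists x y, A x /\ B y /\ d x y <= r.
Proof.
intros HA HB Hr. apply NNPP. intros Hn.
assert (r <= dist_sets d A B); [|lra].
apply (dist_sets_spec A B HA HB). intros x y Ax By.
apply Rnot_lt_le. intros Hxy. apply Hn. exists x, y. split; [|split]; auto; lra.
Qed.

Lemma dist_sets_eq A B D x0 y0 :
  (forall x y, A x -> B y -> D <= d x y) -> A x0 -> B y0 -> d x0 y0 = D ->
  dist_sets d A B = D.
Proof.
intros Hlow Ax0 By0 E.
destruct (dist_sets_spec A B) as [G1 G2]; [exists x0; exact Ax0|exists y0; exact By0|].
apply Rle_antisym; [rewrite <- E; apply G1; assumption|apply G2, Hlow].
Qed.

Lemma delta_spec A B : nonempty A -> nonempty B ->
  metric_bounded d A -> metric_bounded d B ->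
  (forall x y, A x -> B y -> d x y <= delta d A B) /\
  (forall b, (forall x y, A x -> B y -> d x y <= b) -> delta d A B <= b).
Proof.
intros [x0 Ax0] [y0 By0] [z1 [M1 HM1]] [z2 [M2 HM2]].
destruct (real_Lub_Rbar_spec (fun r => exists x y, A x /\ B y /\ r = d x y)) as [L1 L2].
- exists (d x0 y0), x0, y0. auto.
- exists (M1 + d z1 z2 + M2). intros r [x [y [Ax [By ->]]]].
  pose proof (dist_triangle d Hm x z1 y) as Htri. pose proof (dist_triangle d Hm z1 z2 y).
  specialize (HM1 x Ax). specialize (HM2 y By). rewrite (distC d Hm x z1) in Htri. lra.
- split.
  + intros x y Ax By. apply L1. exists x, y. auto.
  + intros b Hb. apply L2. intros r [x [y [Ax [By ->]]]]. auto.
Qed.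

Lemma delta_pt_ge x B y : metric_bounded d B -> B y -> d x y <= delta_pt d x B.
Proof.
intros [z [M HM]] By.
destruct (real_Lub_Rbar_spec (fun r => exists y, B y /\ r = d x y)) as [L1 _].
- exists (d x y), y. auto.
- exists (d x z + M). intros r [y' [By' ->]].
  pose proof (dist_triangle d Hm x z y'). specialize (HM y' By'). lra.
- apply L1. exists y. auto.
Qed.

End DistanceBetweenSets.

Lemma zorn_minimal {T : Type} (P : T -> Prop) (le : T -> T -> Prop) :
  (forall t, le t t) -> (forall r s t, le r s -> le s t -> le r t) -> (exists t, P t) ->
  (forall C : T -> Prop, (exists t, C t) -> C ⊆ P ->
     (forall s t, C s -> C t -> le s t \/ le t s) -> exists m, P m /\ forall t, C t -> le m t) ->
  exists m, P m /\ forall t, P t -> le t m -> le m t.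
Proof.
intros Hrefl Htrans [t0 Pt0] Hchain.
pose (ge (a b : {t | P t}) := boolp.asbool (le (proj1_sig b) (proj1_sig a))).
destruct (@classical_sets.ZL_preorder _ (exist P t0 Pt0) ge) as [[m Pm] Hm].
- intros [t Pt]. apply boolp.asboolT, Hrefl.
- intros [r Pr] [s Ps] [t Pt] Hrs Hst. apply boolp.asboolT.
  apply (Htrans _ s); apply boolp.asboolW; assumption.
- intros Ch Htot. destruct (classic (exists s, Ch s)) as [[[s Ps] Chs]|Hempty].
  + destruct (Hchain (fun t => exists s, Ch s /\ proj1_sig s = t)) as [m [Pm Hm]].
    * exists s, (exist P s Ps). auto.
    * intros t [[t' Pt'] [_ <-]]. exact Pt'.
    * intros a b [sa [Ca <-]] [sb [Cb <-]].
      destruct (Htot sa sb Ca Cb) as [H|H]; apply boolp.asboolW in H; auto.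
    * exists (exist P m Pm). intros s' Chs'. apply boolp.asboolT, Hm. eauto.
  + exists (exist P t0 Pt0). intros s Chs. destruct Hempty. eauto.
- exists m. split; [exact Pm|]. intros t Pt Htm.
  apply boolp.asboolW, (Hm (exist P t Pt)), boolp.asboolT, Htm.
Qed.

Section AdmissiblePairs.
Context {X : Type} (d : X -> X -> R).
Hypotheses (Hm : is_metric d) (Hb : busemann_convex d) (Hg : geodesic_space d)
  (Hr : reflexive d).
Variables (T : X -> X) (D : R).

Local Notation near := (near d).
Local Notation within := (within d).

Record admissible (E1 E2 : X -> Prop) : Prop := {
  adm_closed1 : metric_closed d E1;
  adm_closed2 : metric_closed d E2;
  adm_convex1 : convex d E1;
  adm_convex2 : convex d E2;
  adm_bounded1 : metric_bounded d E1;
  adm_bounded2 : metric_bounded d E2;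
  adm_invariant1 : forall x, E1 x -> E1 (T x);
  adm_invariant2 : forall y, E2 y -> E2 (T y);
  adm_near : exists x, E1 x /\ near E2 D x }.

Definition subpair (p q : (X -> Prop) * (X -> Prop)) : Prop :=
  fst p ⊆ fst q /\ snd p ⊆ snd q.

Definition minimal_admissible (K1 K2 : X -> Prop) : Prop :=
  admissible K1 K2 /\
  forall E1 E2, admissible E1 E2 -> E1 ⊆ K1 -> E2 ⊆ K2 -> K1 ⊆ E1 /\ K2 ⊆ E2.

Lemma near_sym E1 E2 r : (exists x, E1 x /\ near E2 r x) -> exists y, E2 y /\ near E1 r y.
Proof.
intros [x [E1x [y [E2y Hxy]]]]. exists y. split; [exact E2y|].
exists x. split; [exact E1x|]. rewrite (distC d Hm). exact Hxy.
Qed.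

Lemma nonexpansive_sym E1 E2 :
  relatively_nonexpansive d E1 E2 T -> relatively_nonexpansive d E2 E1 T.
Proof. intros HT y x E2y E1x. rewrite !(distC d Hm _ x), (distC d Hm (T y)). auto. Qed.

Lemma admissible_sym E1 E2 : admissible E1 E2 -> admissible E2 E1.
Proof. intros []. constructor; auto. apply near_sym; assumption. Qed.

Lemma admissible_near_part E1 E2 :
  metric_closed d E1 -> convex d E1 -> metric_bounded d E1 -> (forall x, E1 x -> E1 (T x)) ->
  metric_closed d E2 -> convex d E2 -> (forall y, E2 y -> E2 (T y)) ->
  relatively_nonexpansive d E1 E2 T -> (exists x, E1 x /\ near E2 D x) ->
  admissible E1 (fun y => E2 y /\ near E1 D y).
Proof.
intros Hc1 Hv1 Hb1 HT1 Hc2 Hv2 HT2 HT Hnear. constructor; auto.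
- apply near_closed; assumption.
- apply near_convex; assumption.
- apply (bounded_sub d (near E1 D)); [intros y [_ Hy]; exact Hy|apply near_bounded; assumption].
- intros y [E2y [x [E1x Hyx]]]. split; [auto|]. exists (T x). split; [auto|].
  apply (Rle_trans _ (d y x)); [exact (nonexpansive_sym E1 E2 HT y x E2y E1x)|exact Hyx].
- destruct Hnear as [x [E1x [y [E2y Hxy]]]]. exists x. split; [exact E1x|].
  exists y. repeat split; [exact E2y|exists x; split; [exact E1x|]|exact Hxy].
  rewrite (distC d Hm). exact Hxy.
Qed.

Lemma closed_bigcap {I : Type} (C : I -> Prop) (S : I -> X -> Prop) :
  (forall i, C i -> metric_closed d (S i)) -> metric_closed d (fun x => forall i, C i -> S i x).
Proof.
intros HS x Hx i Ci. apply (HS i Ci). intros eps He.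
destruct (Hx eps He) as [a [Ha Hxa]]. exists a. auto.
Qed.

Lemma convex_bigcap {I : Type} (C : I -> Prop) (S : I -> X -> Prop) :
  (forall i, C i -> convex d (S i)) -> convex d (fun x => forall i, C i -> S i x).
Proof. intros HS x x' c Hx Hx' Hc t Ht i Ci. apply (HS i Ci x x' c); auto. Qed.

(* The pair of points at distance at most D in the intersection is found by
   two applications of reflexivity: first for x, then for y near x. *)
Lemma admissible_chain_inter (C : (X -> Prop) * (X -> Prop) -> Prop) :
  (exists p, C p) -> (forall p q, C p -> C q -> subpair p q \/ subpair q p) ->
  (forall p, C p -> admissible (fst p) (snd p)) ->
  admissible (fun x => forall p, C p -> fst p x) (fun y => forall p, C p -> snd p y).
Proof.
intros [p0 Cp0] Htot HC.
destruct (reflexive_chain_inter d Hr C subpair (fun p x => fst p x /\ near (snd p) D x))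
  as [x Hx]; [exists p0; exact Cp0|exact Htot| | |].
{ intros p q [H1 H2] x [E1x [y [E2y Hxy]]]. split; [auto|]. exists y. auto. }
{ intros p Cp. destruct (HC p Cp) as [Hc1 Hc2 Hv1 Hv2 Hb1 _ _ _ Hn].
  split; [|split; [|split]].
  - exact Hn.
  - apply near_closed; assumption.
  - apply near_convex; assumption.
  - apply (bounded_sub d (fst p)); [intros z [Hz _]; exact Hz|exact Hb1]. }
destruct (reflexive_chain_inter d Hr C subpair (fun p y => snd p y /\ within (eq x) D y))
  as [y Hy]; [exists p0; exact Cp0|exact Htot| | |].
{ intros p q [_ H2] y [E2y Hy]. auto. }
{ intros p Cp. destruct (HC p Cp) as [_ Hc2 _ Hv2 _ _ _ _ _].
  split; [|split; [|split]].
  - destruct (proj2 (Hx p Cp)) as [y [E2y Hxy]]. exists y. split; [exact E2y|].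
    intros z <-. rewrite (distC d Hm). exact Hxy.
  - apply within_closed; assumption.
  - apply within_convex; assumption.
  - apply (bounded_sub d (within (eq x) D)); [intros z [_ Hz]; exact Hz|].
    apply within_point_bounded; assumption. }
constructor.
- apply closed_bigcap. intros p Cp. eapply adm_closed1, HC, Cp.
- apply closed_bigcap. intros p Cp. eapply adm_closed2, HC, Cp.
- apply convex_bigcap. intros p Cp. eapply adm_convex1, HC, Cp.
- apply convex_bigcap. intros p Cp. eapply adm_convex2, HC, Cp.
- apply (bounded_sub d (fst p0)); [auto|eapply adm_bounded1, HC, Cp0].
- apply (bounded_sub d (snd p0)); [auto|eapply adm_bounded2, HC, Cp0].
- intros z Hz p Cp. eapply adm_invariant1; [apply HC, Cp|apply Hz, Cp].
- intros z Hz p Cp. eapply adm_invariant2; [apply HC, Cp|apply Hz, Cp].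
- exists x. split; [intros p Cp; apply (Hx p Cp)|].
  exists y. split; [intros p Cp; apply (Hy p Cp)|].
  rewrite (distC d Hm). apply (proj2 (Hy p0 Cp0)). reflexivity.
Qed.

Lemma exists_minimal_admissible A B :
  admissible A B -> exists K1 K2, minimal_admissible K1 K2 /\ K1 ⊆ A /\ K2 ⊆ B.
Proof.
intros HAB.
destruct (zorn_minimal (fun p => admissible (fst p) (snd p) /\ subpair p (A, B)) subpair)
  as [[K1 K2] [[HK HKAB] Hmin]].
- intros p. split; auto.
- intros p q s [H1 H2] [H3 H4]. split; auto.
- exists (A, B). split; [exact HAB|split; auto].
- intros C [p0 Cp0] HCP Htot.
  exists (fun x => forall p, C p -> fst p x, fun y => forall p, C p -> snd p y).
  split; [split|].
  + apply admissible_chain_inter; [exists p0; exact Cp0|exact Htot|].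
    intros p Cp. apply HCP, Cp.
  + destruct (proj2 (HCP p0 Cp0)) as [H1 H2].
    split; intros z Hz; [apply H1|apply H2]; apply Hz, Cp0.
  + intros p Cp. split; simpl; intros z Hz; apply Hz, Cp.
- destruct HKAB as [HKA HKB]. simpl in *.
  exists K1, K2. split; [split; [exact HK|]|auto].
  intros E1 E2 HE H1 H2.
  apply (Hmin (E1, E2)); [split; [exact HE|split; simpl; auto]|split; auto].
Qed.

Section MinimalPair.
Variables K1 K2 : X -> Prop.
Hypotheses (HK : minimal_admissible K1 K2) (HT : relatively_nonexpansive d K1 K2 T).

Lemma minimal_near_l : K1 ⊆ near K2 D.
Proof.
destruct HK as [[] Hmin].
assert (HE : admissible (fun x => K1 x /\ near K2 D x) K2).
{ apply admissible_sym, admissible_near_part; auto.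
  - apply nonexpansive_sym, HT.
  - apply near_sym; assumption. }
intros x K1x. apply (proj1 (Hmin _ _ HE (fun z Hz => proj1 Hz) (fun z Hz => Hz)) x K1x).
Qed.

Lemma minimal_near_r : K2 ⊆ near K1 D.
Proof.
destruct HK as [[] Hmin].
assert (HE : admissible K1 (fun y => K2 y /\ near K1 D y)) by (apply admissible_near_part; auto).
intros y K2y. apply (proj2 (Hmin _ _ HE (fun z Hz => Hz) (fun z Hz => proj1 Hz)) y K2y).
Qed.

(* The bound [r] on the distances from one point of [K1] to [K2] spreads to all
   of [K1]: the set [K1'] of such points is [T]-invariant because, by minimality,
   every point of [K2] lies within [r] of [T K1']; minimality again gives K1' = K1. *)
Lemma minimal_within x1 r : K1 x1 -> within K2 r x1 -> K1 ⊆ within K2 r.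
Proof.
intros K1x1 Hx1. destruct HK as [HKadm Hmin].
pose proof HKadm as [Hc1 Hc2 Hv1 Hv2 Hb1 Hb2 HT1 HT2 [x0 [K1x0 [y0 [K2y0 Hxy0]]]]].
set (K1' := fun x => K1 x /\ within K2 r x).
set (L2 := fun y => K2 y /\ within (fun z => exists x, K1' x /\ T x = z) r y).
assert (HTL2 : forall y, K2 y -> L2 (T y)).
{ intros y K2y. split; [auto|]. intros z [x [[K1x Hx] <-]].
  rewrite (distC d Hm). apply (Rle_trans _ (d x y)); auto. }
assert (HL2 : admissible K1 L2).
{ constructor; auto.
  - apply within_closed; assumption.
  - apply within_convex; assumption.
  - apply (bounded_sub d K2); [intros y [K2y _]; exact K2y|exact Hb2].
  - intros y [K2y _]. apply HTL2, K2y.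
  - exists (T x0). split; [auto|]. exists (T y0). split; [auto|].
    apply (Rle_trans _ (d x0 y0)); auto. }
assert (HK2 : K2 ⊆ L2) by (apply (Hmin K1 L2 HL2); [auto|intros y [K2y _]; exact K2y]).
assert (HK1' : admissible K1' K2).
{ constructor; auto.
  - apply within_closed; assumption.
  - apply within_convex; assumption.
  - apply (bounded_sub d K1); [intros x [K1x _]; exact K1x|exact Hb1].
  - intros x Hx. split; [apply HT1, Hx|]. intros y K2y.
    rewrite (distC d Hm). apply (proj2 (HK2 y K2y)). exists x. auto.
  - exists x1. split; [split; assumption|apply minimal_near_l, K1x1]. }
intros x K1x. apply (proj1 (Hmin K1' K2 HK1' (fun z Hz => proj1 Hz) (fun z Hz => Hz)) x K1x).
Qed.

Hypothesis Hlow : forall x y, K1 x -> K2 y -> D <= d x y.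

Lemma minimal_nonempty : nonempty K1 /\ nonempty K2.
Proof.
destruct HK as [[_ _ _ _ _ _ _ _ [x [K1x [y [K2y _]]]]] _].
split; [exists x|exists y]; assumption.
Qed.

Lemma minimal_dist_sets : dist_sets d K1 K2 = D.
Proof.
destruct HK as [[_ _ _ _ _ _ _ _ [x [K1x [y [K2y Hxy]]]]] _].
apply (dist_sets_eq d Hm K1 K2 D x y Hlow K1x K2y).
apply Rle_antisym; [exact Hxy|apply Hlow; assumption].
Qed.

Lemma minimal_proximal : proximal_pair d K1 K2.
Proof.
intros a b K1a K2b. rewrite minimal_dist_sets.
destruct (minimal_near_l a K1a) as [b' [K2b' Hab']].
destruct (minimal_near_r b K2b) as [a' [K1a' Hba']].
exists a', b'. rewrite (distC d Hm a' b).
repeat split; try assumption; apply Rle_antisym; auto.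
rewrite (distC d Hm). auto.
Qed.

Lemma minimal_delta_le A B :
  proximal_normal_structure d A B -> K1 ⊆ A -> K2 ⊆ B -> dist_sets d A B = D ->
  delta d K1 K2 <= D.
Proof.
intros Hpns HKA HKB HD. destruct HK as [[Hc1 Hc2 Hv1 Hv2 Hb1 Hb2 _ _ _] _].
destruct minimal_nonempty as [HK1 HK2].
apply Rnot_lt_le. intros Hgt.
destruct (Hpns K1 K2 HK1 HK2 Hc1 Hc2 Hb1 Hb2 Hv1 Hv2 minimal_proximal HKA HKB)
  as [x1 [x2 [K1x1 [_ [Hx1 _]]]]]; rewrite ?minimal_dist_sets; auto.
assert (Hwithin : within K2 (delta_pt d x1 K2) x1).
{ intros y K2y. apply (delta_pt_ge d Hm); assumption. }
pose proof (minimal_within x1 _ K1x1 Hwithin) as Hall.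
assert (delta d K1 K2 <= delta_pt d x1 K2); [|lra].
apply (delta_spec d Hm K1 K2); auto. intros x y K1x K2y. apply (Hall x K1x y K2y).
Qed.

Lemma minimal_fixed_points :
  delta d K1 K2 <= D -> exists x y, K1 x /\ K2 y /\ x = T x /\ y = T y /\ d x y = D.
Proof.
intros Hdelta. destruct HK as [[Hc1 Hc2 Hv1 Hv2 Hb1 Hb2 HT1 HT2 _] _].
destruct minimal_nonempty as [HK1 HK2].
assert (Hall : forall x y, K1 x -> K2 y -> d x y = D).
{ intros x y K1x K2y. apply Rle_antisym; [|auto].
  eapply Rle_trans; [apply (delta_spec d Hm K1 K2 HK1 HK2 Hb1 Hb2)|]; eauto. }
destruct HK1 as [x K1x], HK2 as [y K2y]. exists x, y. repeat split; auto.
- apply (convex_equidistant_eq d Hm Hb Hg K1 y D); auto.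
  intros z K1z. rewrite (distC d Hm). auto.
- apply (convex_equidistant_eq d Hm Hb Hg K2 x D); auto.
Qed.

End MinimalPair.

End AdmissiblePairs.

Theorem mainTheorem3 (X : Type) (d : X -> X -> R) (A B : X -> Prop) (T : X -> X) :
  is_metric d -> geodesic_space d -> busemann_convex d -> reflexive d ->
  nonempty A -> nonempty B -> metric_closed d A -> metric_closed d B ->
  convex d A -> convex d B -> metric_bounded d A ->
  (forall x, A x \/ B x -> A (T x) \/ B (T x)) ->
  noncyclic A B T -> relatively_nonexpansive d A B T ->
  proximal_normal_structure d A B ->
  exists x y, A x /\ B y /\ x = T x /\ y = T y /\ d x y = dist_sets d A B.
Proof.
intros Hm Hg Hb Hr HA HB HcA HcB HvA HvB HbA _ [HTA HTB] HT Hpns.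
set (D := dist_sets d A B).
destruct (dist_sets_spec d Hm A B HA HB) as [Hlow _].
destruct (near_attained d Hm Hb Hg Hr A B D HcA HvA HbA HcB HvB) as [x0 Hx0].
{ intros r Hr0. destruct (dist_sets_approx d Hm A B r HA HB Hr0) as [x [y [Ax [By Hxy]]]].
  exists x. split; [exact Ax|exists y; auto]. }
destruct (exists_minimal_admissible d Hm Hb Hg Hr T D A (fun y => B y /\ near d A D y))
  as [K1 [K2 [HK [HKA HKB]]]].
{ apply admissible_near_part; eauto. }
assert (HKT : relatively_nonexpansive d K1 K2 T).
{ intros x y K1x K2y. apply HT; [apply HKA|apply HKB]; assumption. }
assert (HKlow : forall x y, K1 x -> K2 y -> D <= d x y).
{ intros x y K1x K2y. apply Hlow; [apply HKA|apply HKB]; assumption. }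
destruct (minimal_fixed_points d Hm Hb Hg T D K1 K2 HK HKlow) as [x [y [K1x [K2y Hxy]]]].
{ apply (minimal_delta_le d Hm Hb Hg Hr T D K1 K2 HK HKT HKlow A B Hpns); auto.
  intros y K2y. apply HKB, K2y. }
exists x, y. split; [apply HKA, K1x|split; [apply HKB, K2y|exact Hxy]].
Qed.
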